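(* Assume $\operatorname{non}(\mathcal N)=\mathfrak c$. Then $\mathcal{NM}_{\mathfrak c}$, $\mathcal{NF}_{\mathfrak c}$ and $\mathcal{ND}_{\mathfrak c}$ are positively $2^{\mathfrak c}$-coneable in $\left(\mathbb R^{[0,1]}\right)^{\mathfrak c}$.
   Context: For a regular infinite cardinal $\kappa$ (viewed as the directed set of ordinals $<\kappa$ with the usual order), a $\kappa$-sequence $(x_\alpha)_{\alpha<\kappa}$ in a topological space converges to $x$ if for every neighbourhood $U$ of $x$ there is $\alpha_0<\kappa$ with $x_\alpha\in U$ for all $\alpha_0<\alpha<\kappa$; $\left(\mathbb R^{[0,1]}\right)^{\kappa}$ is the real vector space/algebra of $\kappa$-sequences of functions $[0,1]\to\mathbb R$ with indexwise operations. $\lambda$ is Lebesgue measure, $\mathcal N$ the null subsets of $[0,1]$, $\operatorname{non}(\mathcal N)$ the least cardinality of a non-null subset of $[0,1]$, $\mathfrak c=2^{\aleph_0}$. For bounded $\kappa$-sequences of reals, $\liminf$ is the infimum of the set of cluster points. $\mathcal{NM}_{\kappa}$: $\kappa$-sequences of Lebesgue measurable $f_\alpha:[0,1]\to\mathbb R$ with $0\le f_\alpha\le f_\beta$ a.e. whenever $\alpha\le\beta$, converging pointwise a.e. to an integrable $f$, and with $\int f_\alpha\,d\lambda$ not converging to $\int f\,d\lambda$. $\mathcal{NF}_{\kappa}$: $\kappa$-sequences of Lebesgue measurable $f_\alpha\ge0$ a.e. on $[0,1]$ with $x\mapsto\liminf_\alpha f_\alpha(x)$ integrable and $\int\liminf_\alpha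 f_\alpha\,d\lambda>\liminf_\alpha\int f_\alpha\,d\lambda$. $\mathcal{ND}_{\kappa}$: $\kappa$-sequences of Lebesgue measurable $f_\alpha:[0,1]\to\mathbb R$ with some integrable $g$ such that $|f_\alpha|\le g$ a.e. for all $\alpha$, $f_\alpha\to f$ a.e. for some integrable $f$, and $\int|f_\alpha-f|\,d\lambda\not\to0$. $S$ is positively $\mu$-coneable if there is a linearly independent $B\subset S$ with $\operatorname{card}(B)=\mu$ such that every combination $\sum a_ix_i$, $a_i>0$, $x_i\in B$ (finite) lies in $S$. *)

From HB Require Import structures.
From mathcomp Require Import all_boot all_order all_algebra.
From mathcomp Require Import all_classical all_reals all_analysis.
Set Implicit Arguments. Unset Strict Implicit. Unset Printing Implicit Defensive.
Import Order.TTheory GRing.Theory Num.Theory.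
Import numFieldTopology.Exports numFieldNormedType.Exports.
Local Open Scope classical_set_scope.
Local Open Scope ring_scope.

Section kappa_sequences.
Context (d : Order.disp_t) (I : orderType d).

Definition wellordered : Prop :=
  forall A : set I, A !=set0 -> exists i, A i /\ forall j, A j -> (i <= j)%O.

(* (I, <) has the order type of the initial ordinal of 2^aleph_0 = card R,
   i.e. I "is" the directed set of ordinals < c. *)
Definition is_initial_ordinal_of_c (R : realType) : Prop :=
  [/\ wellordered,
      ([set: I] #= [set: R])%card &
      forall i : I, ~ ([set: R] #<= [set j | (j < i)%O])%card].

Definition kconv {T : topologicalType} (x : I -> T) (l : T) : Prop :=
  forall U, nbhs l U -> exists a0, forall a, (a0 < a)%O -> U (x a).

Definition kcluster {T : topologicalType} (x : I -> T) (y : T) : Prop :=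
  forall U, nbhs y U -> forall a0, exists a, (a0 < a)%O /\ U (x a).

Definition kliminf {R : realType} (x : I -> \bar R) : \bar R :=
  ereal_inf [set y | kcluster x y].
End kappa_sequences.

Section lebesgue.
Context (R : realType).

(* carrier of the completed Lebesgue measure (the Lebesgue measurable sets);
   as a type it is R *)
Definition LT := caratheodory_type (R:=R)
  (T:=lebesgue_stieltjes_measure_ocitv_type__canonical__measurable_structure_SemiRingOfSets R)
  (wlength idfun)^*%mu.
Definition lam : set LT -> \bar R := @completed_lebesgue_measure R.
Definition D01 : set LT := `[0%R, 1%R].

Definition nonN_eq_c : Prop :=
  forall A : set LT, A `<=` D01 -> ~ ([set: R] #<= A)%card -> lam.-negligible A.

Context (d : Order.disp_t) (I : orderType d).

Local Open Scope ereal_scope.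

Definition NM : set (I -> LT -> R) := fun f =>
  [/\ forall a, measurable_fun D01 (f a),
      forall a b, (a <= b)%O ->
        {ae lam, forall x, D01 x -> (0 <= f a x <= f b x)%R} &
      exists g : LT -> R,
        [/\ lam.-integrable D01 (EFin \o g),
            {ae lam, forall x, D01 x -> kconv (fun a => f a x) (g x)} &
            ~ kconv (fun a => \int[lam]_(x in D01) (f a x)%:E)
                    (\int[lam]_(x in D01) (g x)%:E)]].

Definition NF : set (I -> LT -> R) := fun f =>
  [/\ forall a, measurable_fun D01 (f a),
      forall a, {ae lam, forall x, D01 x -> (0 <= f a x)%R},
      lam.-integrable D01 (fun x => kliminf (fun a => (f a x)%:E)) &
      kliminf (fun a => \int[lam]_(x in D01) (f a x)%:E)
        < \int[lam]_(x in D01) kliminf (fun a => (f a x)%:E)].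

Definition ND : set (I -> LT -> R) := fun f =>
  [/\ forall a, measurable_fun D01 (f a),
      exists g : LT -> R, lam.-integrable D01 (EFin \o g) /\
        forall a, {ae lam, forall x, D01 x -> (`|f a x| <= g x)%R} &
      exists h : LT -> R,
        [/\ lam.-integrable D01 (EFin \o h),
            {ae lam, forall x, D01 x -> kconv (fun a => f a x) (h x)} &
            ~ kconv (fun a => \int[lam]_(x in D01) (`|f a x - h x|)%:E) 0]].

Local Close Scope ereal_scope.

(* linear independence in (R^[0,1])^I : elements are compared through their
   values on [0,1] *)
Definition lin_indep (B : set (I -> LT -> R)) : Prop :=
  forall (n : nat) (v : 'I_n -> I -> LT -> R) (c : 'I_n -> R),
    (forall i, B (v i)) -> injective v ->
    (forall a x, D01 x -> \sum_(i < n) c i * v i a x = 0) ->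
    forall i, c i = 0.

Definition pos_coneable_2c (S : set (I -> LT -> R)) : Prop :=
  exists B : set (I -> LT -> R),
    [/\ (B #= [set: set R])%card, lin_indep B &
        forall (n : nat) (v : 'I_n.+1 -> I -> LT -> R) (c : 'I_n.+1 -> R),
          (forall i, B (v i)) -> (forall i, 0 < c i) ->
          S (fun a x => \sum_(i < n.+1) c i * v i a x)].
End lebesgue.

From HB Require Import structures.
From mathcomp Require Import all_boot all_order all_algebra.
From mathcomp Require Import all_classical all_reals all_analysis.
From mathcomp Require Import measurable_realfun lra.
Set Implicit Arguments. Unset Strict Implicit. Unset Printing Implicit Defensive.
Import Order.TTheory GRing.Theory Num.Theory.
Import numFieldTopology.Exports numFieldNormedType.Exports.
Local Open Scope classical_set_scope.
Local Open Scope ring_scope.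

(* Fix an injection j : R -> I.  Initial segments of I are smaller than c, so
   by non(N) = c each set {x in [0,1] | j x < a} is null.  Hence a threshold
   sequence, S a x = C [j x < a] for x <> 0 with C > 0, is a.e. zero for every
   index a while it converges to the constant C at every x <> 0: it lies in
   NM, NF and ND (section threshold_sequences).  To obtain 2^c independent
   such sequences we use the origin, where the values are unconstrained: an
   injection code of finite lists of constraints "r \in A iff b" into I is
   built from the Dedekind cuts of reals and a ternary expansion, and
   family A a 0 records whether A satisfies the constraints coded by a.
   Distinct sets are separated by such a list, which gives linear
   independence, and a positive combination of members of the family is a
   threshold sequence whose height is the sum of the coefficients. *)

Section unit_interval.
Variable R : realType.
Local Notation T := (LT R).
Local Notation mu := (@lam R).
Local Notation D := (@D01 R).

Lemma measurable_D01 : measurable D.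
Proof. by apply: sub_caratheodory; exact: measurable_itv. Qed.

Lemma lam_D01 : mu D = 1%E.
Proof.
transitivity (@lebesgue_measure R `[0%R, 1%R]%classic); first by [].
by rewrite lebesgue_measure_itv /= lte01 oppr0 adde0.
Qed.

Lemma negligible_origin : mu.-negligible [set (0 : T)].
Proof.
apply/negligibleP; first by apply: sub_caratheodory; exact: measurable_set1.
exact: lebesgue_measure_set1.
Qed.

Lemma negligible_measurable (A : set T) : mu.-negligible A -> measurable A.
Proof. exact: completed_lebesgue_measure_is_complete. Qed.

Lemma ae_off_negligible (P : T -> Prop) (M : set T) : mu.-negligible M ->
  (forall x, ~ M x -> P x) -> {ae mu, forall x, P x}.
Proof.
move=> nM HP; apply: (negligibleS _ nM) => x /= nPx.
by apply: contrapT => Mx; apply: nPx; exact: HP.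
Qed.

Lemma ae_cst_measurable (d' : measure_display) (U : sigmaRingType d')
  (f : T -> U) (k : U) (M : set T) : mu.-negligible M ->
  (forall x, D x -> ~ M x -> f x = k) -> measurable_fun D f.
Proof.
move=> nM fk _ Y _.
have mM := negligible_measurable nM.
have [Yk|Yk] := pselect (Y k).
- have -> : D `&` f @^-1` Y = (D `\` M) `|` (D `&` M `&` f @^-1` Y).
    apply/seteqP; split => x /=.
    + by move=> [Dx Yx]; have [Mx|Mx] := pselect (M x); [right|left].
    + by move=> [[Dx Mx]|[[Dx _] Yx]] //; split => //; rewrite fk.
  apply: measurableU; first exact: measurableD measurable_D01 mM.
  by apply: negligible_measurable; apply: (negligibleS _ nM) => x [[]].
- apply: negligible_measurable; apply: (negligibleS _ nM) => x [Dx Yx].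
  by apply: contrapT => Mx; apply: Yk; rewrite -(fk x Dx Mx).
Qed.

Lemma ae_cst_integral (f : T -> \bar R) (k : R) (M : set T) :
  mu.-negligible M -> (forall x, D x -> ~ M x -> f x = k%:E) ->
  (\int[mu]_(x in D) f x = k%:E)%E.
Proof.
move=> nM fk; rewrite (ae_eq_integral (cst k%:E)).
- rewrite integral_cst; last exact: measurable_D01.
  by rewrite -[X in (_ * X)%E]/(mu D) lam_D01 mule1.
- exact: measurable_D01.
- exact: ae_cst_measurable nM fk.
- exact: measurable_cst.
- by apply: (ae_off_negligible nM) => x Mx Dx; rewrite fk.
Qed.

Lemma ae_cst_integrable (f : T -> \bar R) (k : R) (M : set T) :
  mu.-negligible M -> (forall x, D x -> ~ M x -> f x = k%:E) ->
  mu.-integrable D f.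
Proof.
move=> nM fk; apply/integrableP; split; first exact: ae_cst_measurable nM fk.
by rewrite (@ae_cst_integral _ `|k| M nM) ?ltry // => x Dx Mx; rewrite fk.
Qed.
End unit_interval.

Section eventually_constant_sequences.
Variables (d : Order.disp_t) (I : orderType d).

Lemma kconv_eventually_cst (T : topologicalType) (x : I -> T) (l : T) (a0 : I) :
  (forall a, (a0 < a)%O -> x a = l) -> kconv x l.
Proof. by move=> xl U Ul; exists a0 => a /xl ->; exact: nbhs_singleton. Qed.

Hypothesis unbounded : forall a0 : I, exists a, (a0 < a)%O.

Lemma not_kconv_cst (T : topologicalType) (k l : T) :
  hausdorff_space T -> k <> l -> ~ kconv (fun _ : I => k) l.
Proof.
move=> hT kl kl_cvg; apply: kl; apply: hT => A B Ak Bl.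
have [a0 Ha0] := kl_cvg B Bl; have [a a0a] := unbounded a0.
by exists k; split; [exact: nbhs_singleton | exact: Ha0 a0a].
Qed.

Lemma kliminf_eventually_cst (R : realType) (x : I -> \bar R) (k : \bar R)
  (a0 : I) : (forall a, (a0 < a)%O -> x a = k) -> kliminf x = k.
Proof.
move=> xk; rewrite /kliminf.
suff -> : [set y | kcluster x y] = [set k] by rewrite ereal_inf1.
apply/seteqP; split => y /=.
- move=> y_cluster; apply/esym; apply: (@ereal_hausdorff R) => A B Ak By.
  have [a [a0a Axa]] := y_cluster B By a0.
  by exists k; split; [exact: nbhs_singleton | rewrite -(xk a a0a)].
- move=> -> U Uk a1; have [a] := unbounded (Order.max a0 a1).
  rewrite gt_max => /andP[a0a a1a].
  by exists a; split => //; rewrite xk //; exact: nbhs_singleton.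
Qed.
End eventually_constant_sequences.

Section threshold_sequences.
Variables (R : realType) (d : Order.disp_t) (I : orderType d).
Local Notation T := (LT R).
Local Notation mu := (@lam R).
Local Notation D := (@D01 R).

Definition threshold_seq (e : T -> I) (C : R) (S : I -> T -> R) : Prop :=
  forall a x, x != 0 -> S a x = C * ((e x < a)%O)%:R.

Hypothesis unbounded : forall a0 : I, exists a, (a0 < a)%O.
Variable e : T -> I.
Hypothesis null_segments : forall a, mu.-negligible [set x | D x /\ (e x < a)%O].
Variables (C : R) (S : I -> T -> R).
Hypotheses (C_gt0 : 0 < C) (S_threshold : threshold_seq e C S).

Let M a := [set x | D x /\ (e x < a)%O] `|` [set 0].

Let M_negligible a : mu.-negligible (M a).
Proof. by apply: negligibleU; [exact: null_segments | exact: negligible_origin]. Qed.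

Let S_ae0 a x : D x -> ~ M a x -> S a x = 0.
Proof.
move=> Dx Mx; have x0 : x != 0 by apply: contra_notN Mx => /eqP x0; right.
rewrite S_threshold //; case: (boolP (e x < a)%O) => [ex|_].
- by exfalso; apply: Mx; left.
- by rewrite mulr0n mulr0.
Qed.

Let S_measurable a : measurable_fun D (S a).
Proof. exact: ae_cst_measurable (M_negligible a) (@S_ae0 a). Qed.

Let S_integral a : (\int[mu]_(x in D) (S a x)%:E = 0%:E)%E.
Proof. by apply: ae_cst_integral (M_negligible a) _ => x Dx Mx; rewrite S_ae0. Qed.

Let S_eventually x : x != 0 -> forall a, (e x < a)%O -> S a x = C.
Proof. by move=> x0 a ea; rewrite S_threshold // ea mulr1. Qed.

Let S_cvg : {ae mu, forall x, D x -> kconv (fun a => S a x) C}.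
Proof.
apply: ae_off_negligible (@negligible_origin R) _ => x /eqP x0 _.
exact: kconv_eventually_cst (S_eventually x0).
Qed.

Let S_range a x : x != 0 -> S a x = 0 \/ S a x = C.
Proof.
move=> x0; rewrite S_threshold //.
by case: (e x < a)%O; rewrite ?mulr1n ?mulr0n ?mulr1 ?mulr0; [right | left].
Qed.

Let S_ge0 a : {ae mu, forall x, D x -> 0 <= S a x}.
Proof.
apply: ae_off_negligible (@negligible_origin R) _ => x /eqP x0 _.
by case: (S_range a x0) => ->; rewrite // ltW.
Qed.

Let C_integrable : mu.-integrable D (fun _ => C%:E).
Proof. exact: ae_cst_integrable (negligible_set0 _) _. Qed.

(* The integrals are all 0 while the pointwise limit C has integral C. *)
Lemma threshold_NM : NM S.
Proof.
split; first exact: S_measurable.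
- move=> a b ab; apply: ae_off_negligible (@negligible_origin R) _ => x /eqP x0 _.
  rewrite !S_threshold //; case: (boolP (e x < a)%O) => ea.
  + by rewrite (lt_le_trans ea ab) mulr1n mulr1 lexx andbT ltW.
  + rewrite mulr0n mulr0 lexx /=.
    by case: (e x < b)%O; rewrite ?mulr1n ?mulr0n ?mulr1 ?mulr0 // ltW.
- exists (fun _ => C); split; [exact: C_integrable | exact: S_cvg |].
  rewrite (ae_cst_integral (negligible_set0 _) (k := C)) //.
  under eq_fun do rewrite S_integral.
  by apply: not_kconv_cst (@ereal_hausdorff R) _ => // -[] /eqP; rewrite eq_sym gt_eqF.
Qed.

(* Off the origin the liminf of S a x is C, while the integrals are 0. *)
Lemma threshold_NF : NF S.
Proof.
have liminfS x : x != 0 -> kliminf (fun a => (S a x)%:E) = C%:E.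
  move=> x0; apply: (kliminf_eventually_cst unbounded (a0 := e x)) => a ea.
  by rewrite S_eventually.
split; [exact: S_measurable | exact: S_ge0 | |].
- apply: ae_cst_integrable (@negligible_origin R) _ => x _ /eqP.
  exact: liminfS.
- rewrite (ae_cst_integral (@negligible_origin R) (k := C)); last first.
    by move=> x _ /eqP; exact: liminfS.
  under eq_fun do rewrite S_integral.
  by rewrite (kliminf_eventually_cst unbounded (k := 0%:E) (a0 := e 0)).
Qed.

(* The sequence is dominated by C, converges a.e. to C, but the L1 distance
   to C stays equal to C. *)
Lemma threshold_ND : ND S.
Proof.
split; first exact: S_measurable.
- exists (fun _ => C); split; first exact: C_integrable.
  move=> a.
  apply: ae_off_negligible (@negligible_origin R) _ => x /eqP x0 _.
  by case: (S_range a x0) => ->; rewrite ?normr0 ?gtr0_norm // ltW.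
- exists (fun _ => C); split; [exact: C_integrable | exact: S_cvg |].
  have dist a : (\int[mu]_(x in D) (`|S a x - C|)%:E = C%:E)%E.
    apply: ae_cst_integral (M_negligible a) _ => x Dx Mx.
    by rewrite S_ae0 // sub0r normrN gtr0_norm.
  under eq_fun do rewrite dist.
  by apply: not_kconv_cst (@ereal_hausdorff R) _ => // -[] /eqP; rewrite gt_eqF.
Qed.
End threshold_sequences.

Section ternary_expansion.
Variable R : realType.

(* tern b = sum_k 2 b_k / 3^(k+1) is the point of the Cantor set with ternary
   digits 2 b_k; it gives an injection of bit streams into R. *)
Let p (k : nat) : R := 3^-1 ^+ k.

Let p_ge0 k : 0 <= p k.
Proof. by rewrite /p exprn_ge0 // invr_ge0. Qed.

Let pS k : p k.+1 = p k / 3.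
Proof. by rewrite /p exprSr. Qed.

Definition tern_partial (b : nat -> bool) (n : nat) : R :=
  \sum_(k < n) (b k)%:R * (2 * p k.+1).

Definition tern (b : nat -> bool) : R := sup (range (tern_partial b)).

Let tern_partialS b n :
  tern_partial b n.+1 = tern_partial b n + (b n)%:R * (2 * p n.+1).
Proof. by rewrite /tern_partial big_ord_recr. Qed.

Let bit_bounds (b : bool) : 0 <= (b%:R : R) <= 1.
Proof. by case: b; rewrite ?lexx ?ler01. Qed.

Let tern_partial_tail b n m : (n <= m)%N ->
  tern_partial b m <= tern_partial b n + p n - p m.
Proof.
elim: m => [|m IH]; first by rewrite leqn0 => /eqP ->; lra.
rewrite leq_eqVlt => /orP[/eqP <-|]; first by lra.
rewrite ltnS => /IH H; rewrite tern_partialS pS.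
by move: (bit_bounds (b m)) => /andP[b0 b1]; have := p_ge0 m; nra.
Qed.

Let tern_partial_mono b n m : (n <= m)%N -> tern_partial b n <= tern_partial b m.
Proof.
elim: m => [|m IH]; first by rewrite leqn0 => /eqP ->.
rewrite leq_eqVlt => /orP[/eqP <-//|]; rewrite ltnS => /IH H; rewrite tern_partialS.
by move: (bit_bounds (b m)) => /andP[b0 b1]; have := p_ge0 m.+1; nra.
Qed.

Let tern_has_sup b : has_sup (range (tern_partial b)).
Proof.
split; first by exists (tern_partial b 0), 0%N.
exists 1 => _ [m _ <-]; have := tern_partial_tail b (leq0n m).
by have := p_ge0 m; rewrite /tern_partial big_ord0 /p expr0; lra.
Qed.

Let tern_ge b n : tern_partial b n <= tern b.
Proof. by apply: sup_upper_bound (tern_has_sup b) _ _; exists n. Qed.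

Let tern_le b n : tern b <= tern_partial b n + p n.
Proof.
apply: ge_sup; first by exists (tern_partial b 0), 0%N.
move=> _ [m _ <-]; have [nm|mn] := leqP n m.
- by have := tern_partial_tail b nm; have := p_ge0 m; lra.
- by have := tern_partial_mono b (ltnW mn); have := p_ge0 n; lra.
Qed.

Lemma tern_first_difference (b b' : nat -> bool) (m : nat) :
  (forall k, (k < m)%N -> b k = b' k) -> b m -> ~~ b' m -> tern b' < tern b.
Proof.
move=> same_before bm b'm.
have same : tern_partial b m = tern_partial b' m.
  by apply: eq_bigr => k _; rewrite same_before.
have := tern_ge b m.+1; have := tern_le b' m.+1.
rewrite !tern_partialS bm (negbTE b'm) same pS /=.
have : 0 < p m by rewrite /p exprn_gt0 // invr_gt0.
lra.
Qed.

Lemma tern_inj : injective tern.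
Proof.
move=> b b' bb'; apply/funext => k; apply: contrapT => /eqP neq.
pose m := ex_minn (ex_intro (fun k => b k != b' k) k neq).
have [bm same_before] : b m != b' m /\ forall k, (k < m)%N -> b k = b' k.
  rewrite /m; case: ex_minnP => m0 bm0 m0_min; split => // i im0.
  by apply/eqP; apply: contraTT im0 => /m0_min; rewrite -leqNgt.
move: bm; case Eb : (b m); case Eb' : (b' m) => // _.
- by have := tern_first_difference same_before Eb (negbT Eb'); rewrite bb' ltxx.
- have same_before' i : (i < m)%N -> b' i = b i by move=> im; rewrite same_before.
  by have := tern_first_difference same_before' Eb' (negbT Eb); rewrite bb' ltxx.
Qed.
End ternary_expansion.

Section encoding.
Variable R : realType.

(* The Dedekind cut of x, as a bit stream indexed by codes of rationals. *)
Definition rat_cut (x : R) (n : nat) : bool :=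
  if @unpickle rat n is Some r then x < ratr r else false.

Lemma rat_cut_inj : injective rat_cut.
Proof.
suff cut_lt (x y : R) : x < y -> rat_cut x <> rat_cut y.
  by move=> x y xy; case: (ltgtP x y) => // [/cut_lt|/cut_lt/(_ (esym xy))].
move=> xy E; have [r] := rat_in_itvoo xy; rewrite in_itv /= => /andP[xr ry].
have := congr1 (fun f => f (pickle r)) E; rewrite /rat_cut pickleK xr.
by move=> /esym; rewrite ltNge (ltW ry).
Qed.

(* A finite list of (real, bit) pairs, as a bit stream: at index (0, j) we
   record whether j is the length, at (k+1, 0) the k-th bit and at
   (k+1, j+1) the j-th bit of the cut of the k-th real. *)
Definition encode_list (l : seq (R * bool)) (m : nat) : bool :=
  match @unpickle (nat * nat)%type m with
  | Some (k, j) =>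
      if k is k'.+1 then
        let entry := nth (0, false) l k' in
        if j is j'.+1 then rat_cut entry.1 j' else entry.2
      else j == size l
  | None => false
  end.

Lemma encode_list_inj : injective encode_list.
Proof.
move=> l l' E.
have at_pair (k j : nat) : encode_list l (pickle (k, j)) = encode_list l' (pickle (k, j)).
  by rewrite E.
have size_eq : size l = size l'.
  by have := at_pair 0%N (size l); rewrite /encode_list !pickleK eqxx => /esym/eqP.
apply: (eq_from_nth (x0 := (0, false))) => // i _.
have bits := at_pair i.+1 0%N; rewrite /encode_list !pickleK /= in bits.
have cuts : rat_cut (nth (0, false) l i).1 = rat_cut (nth (0, false) l' i).1.
  by apply: funext => j; have := at_pair i.+1 j.+1; rewrite /encode_list !pickleK.
move/rat_cut_inj: cuts.
by case: (nth _ l i) bits => a b; case: (nth _ l' i) => a' b' /= -> ->.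
Qed.
End encoding.

Lemma card_leT_inj (T U : Type) :
  ([set: T] #<= [set: U])%card -> exists f : T -> U, injective f.
Proof.
move=> /card_leP[g]; exists (fun x => sval (g (@SigSub _ _ _ x (mem_set I)))).
by move=> x y /val_inj /(inj (mem_set I) (mem_set I)) [].
Qed.

Lemma card_le_inj_image (T U : Type) (f : T -> U) (A : set T) (B : set U) :
  {in A &, injective f} -> f @` A `<=` B -> (A #<= B)%card.
Proof.
move=> f_inj fAB; apply: card_le_trans (subset_card_le fAB).
by have := inj_card_eq f_inj; rewrite card_eq_sym card_eq_le => /andP[].
Qed.

Section initial_segments.
Variables (R : realType) (d : Order.disp_t) (I : orderType d).
Variable j : R -> I.
Hypothesis j_inj : injective j.
Hypothesis small_segments :
  forall i : I, ~ ([set: R] #<= [set k | (k < i)%O])%card.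

(* I has no greatest element: otherwise, shifting past the preimage of the
   maximum would inject R into the segment below it. *)
Lemma no_greatest_index (a0 : I) : exists a, (a0 < a)%O.
Proof.
apply: contrapT => no_above.
apply: (small_segments (i := a0)).
have le_a0 b : (b <= a0)%O.
  by rewrite leNgt; apply/negP => a0b; apply: no_above; exists b.
suff [g [g_inj g_lt]] : exists g : R -> I, injective g /\ forall x, (g x < a0)%O.
  apply: (card_le_inj_image (f := g)); first by move=> x y _ _ /g_inj.
  by move=> _ [x _ <-]; exact: g_lt.
have [[r0 jr0]|no_pre] := pselect (exists r, j r = a0).
- exists (fun x => j (if x < r0 then x else x + 1)); split.
  + by move=> x y /j_inj; case: (ltP x r0); case: (ltP y r0); lra.
  + move=> x; rewrite lt_neqAle le_a0 andbT -jr0; apply/eqP => /j_inj.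
    by case: (ltP x r0); lra.
- exists j; split => // x; rewrite lt_neqAle le_a0 andbT.
  by apply/eqP => jx; apply: no_pre; exists x.
Qed.

(* Under non(N) = c, the points of [0,1] whose image lies below a given index
   form a null set, being of cardinality smaller than c. *)
Lemma null_initial_segments : nonN_eq_c R ->
  forall a, (@lam R).-negligible [set x : LT R | D01 x /\ (j x < a)%O].
Proof.
move=> nonN a; apply: nonN; first by move=> x [].
move=> c_le; apply: (small_segments (i := a)); apply: card_le_trans c_le _.
apply: (card_le_inj_image (f := j)); first by move=> x y _ _ /j_inj.
by move=> _ [x [_ jx] <-].
Qed.
End initial_segments.

Section separating_family.
Variables (R : realType) (d : Order.disp_t) (I : orderType d).
Variable e : LT R -> I.
(* Indices coding finite lists of membership constraints "r \in A iff b". *)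
Variable code : seq (R * bool) -> I.
Hypothesis code_inj : injective code.

Definition satisfies (A : set R) (l : seq (R * bool)) : bool :=
  all (fun rb => `[< A rb.1 >] == rb.2) l.

(* The list coded by an index (the empty list if it codes none). *)
Definition decode (a : I) : seq (R * bool) := xget [::] [set l | code l = a].

Lemma decodeK l : decode (code l) = l.
Proof.
apply: code_inj; rewrite /decode.
by have := xgetPex [::] (ex_intro (fun l' => code l' = code l) l erefl).
Qed.

Definition family (A : set R) : I -> LT R -> R := fun a x =>
  if x == 0 :> R then (satisfies A (decode a))%:R else ((e x < a)%O)%:R.

Lemma family_code0 A l : family A (code l) 0 = (satisfies A l)%:R.
Proof. by rewrite /family eqxx decodeK. Qed.

Lemma family_inj : injective family.
Proof.
move=> A A' E; apply/funext => r; apply/propext; apply: asbool_eq_equiv.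
have := congr1 (fun F => F (code [:: (r, `[< A r >])]) 0) E.
rewrite /= !family_code0 /satisfies /= !andbT eqxx.
by case: eqP => [->//|_] /eqP; rewrite eqr_nat.
Qed.

(* Finitely many distinct sets are told apart by a finite list of constraints:
   one point of disagreement with A i for each other set. *)
Lemma separating_constraints n (A : 'I_n -> set R) (i : 'I_n) :
  injective A -> exists l, forall k, satisfies (A k) l = (k == i).
Proof.
move=> A_inj.
have /choice [r differ] : forall k, exists r, k != i -> ~ (A k r <-> A i r).
  move=> k; have [->|ki] := eqVneq k i; first by exists 0.
  have /eqP : A k != A i by apply: contra ki => /eqP /A_inj ->.
  move=> Aki; apply: contrapT => agree; apply: Aki; apply/funext => r.
  by apply/propext; apply: contrapT => ?; apply: agree; exists r.
exists [seq (r k, `[< A i (r k) >]) | k <- enum 'I_n] => k.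
have [->|ki] := eqVneq k i; first by apply/allP => _ /mapP[k' _ ->] /=.
apply/negP => /allP /(_ _ (map_f _ (mem_enum _ k))) /= /eqP.
by move=> Ek; apply: (differ k ki); exact: asbool_eq_equiv Ek.
Qed.

(* The family is linearly independent: evaluating a vanishing combination at
   the origin and at an index separating A i from the others gives c i = 0. *)
Lemma family_lin_indep : lin_indep (range family).
Proof.
move=> n v c v_family v_inj vanish i.
have /choice [A vA] : forall k, exists A, family A = v k.
  by move=> k; have [A _ <-] := v_family k; exists A.
have [|l sep] := separating_constraints (A := A) i.
  by move=> k k' Akk'; apply: v_inj; rewrite -!vA Akk'.
have D0 : D01 (0 : LT R) by rewrite /D01 /= in_itv /= lexx ler01.
have := vanish (code l) 0 D0.
under eq_bigr do rewrite -vA family_code0 sep.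
rewrite (bigD1 i) //= eqxx mulr1 big1 ?addr0 // => k /negbTE ->.
by rewrite mulr0.
Qed.

Lemma family_pos_comb n (A : 'I_n.+1 -> set R) (c : 'I_n.+1 -> R) :
  (forall i, 0 < c i) ->
  0 < \sum_i c i /\
  threshold_seq e (\sum_i c i) (fun a x => \sum_i c i * family (A i) a x).
Proof.
move=> c_gt0; split.
  rewrite big_ord_recl; have := c_gt0 ord0.
  have : 0 <= \sum_(i < n) c (lift ord0 i) by apply: sumr_ge0 => k _; exact: ltW.
  lra.
move=> a x x0; rewrite mulr_suml; apply: eq_bigr => k _.
by rewrite /family (negbTE x0).
Qed.

Lemma pos_coneable_of_thresholds (P : set (I -> LT R -> R)) :
  (forall C S, 0 < C -> threshold_seq e C S -> P S) -> pos_coneable_2c P.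
Proof.
move=> P_thresholds; exists (range family); split.
- exact: inj_card_eq (in2W family_inj).
- exact: family_lin_indep.
- move=> n v c v_family c_gt0.
  have /choice [A vA] : forall k, exists A, family A = v k.
    by move=> k; have [A _ <-] := v_family k; exists A.
  have -> : v = fun k => family (A k) by apply/funext => k; rewrite vA.
  have [C_gt0 thr] := family_pos_comb A c_gt0.
  exact: P_thresholds C_gt0 thr.
Qed.
End separating_family.

Theorem mainTheorem7 (R : realType) (d : Order.disp_t) (I : orderType d) :
  @is_initial_ordinal_of_c d I R -> @nonN_eq_c R ->
  [/\ @pos_coneable_2c R d I (@NM R d I), @pos_coneable_2c R d I (@NF R d I) &
      @pos_coneable_2c R d I (@ND R d I)].
Proof.
move=> [_ card_I small_segments] nonN.
have [j j_inj] : exists j : R -> I, injective j.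
  by apply: card_leT_inj; move: card_I; rewrite card_eq_sym card_eq_le => /andP[].
have unbounded := no_greatest_index j_inj small_segments.
have null_segments := null_initial_segments j_inj small_segments nonN.
pose code (l : seq (R * bool)) := j (tern R (encode_list l)).
have code_inj : injective code.
  by move=> l l' /j_inj /tern_inj /encode_list_inj.
split; apply: (pos_coneable_of_thresholds (e := j) code_inj) => C S C_gt0 thr.
- exact: (threshold_NM (e := j) unbounded null_segments C_gt0 thr).
- exact: (threshold_NF (e := j) unbounded null_segments C_gt0 thr).
- exact: (threshold_ND (e := j) unbounded null_segments C_gt0 thr).
Qed.
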